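(* Let $N$ be a $(-1,0,1)$-matrix of size $b\times c$ such that each column $\mathbf{n}^j$ satisfies one of: (i) $\sum_{h=1}^b n^j_h=0$; (ii) $b/2$ entries of $\mathbf{n}^j$ equal $1$ and $b/2$ entries equal $0$; (iii) $b/2$ entries equal $-1$ and $b/2$ entries equal $0$; (iv) $\mathbf{n}^j=\mathbf{1}_b$; (v) $\mathbf{n}^j=-\mathbf{1}_b$. Let $\tilde N$ be the matrix obtained from $N$ by replacing each column of type (i) by $-\mathbf{n}^j$, each column of type (ii) by $\mathbf{1}_b-\mathbf{n}^j$, each column of type (iii) by $-\mathbf{1}_b-\mathbf{n}^j$, and leaving columns of types (iv) and (v) unchanged. Let $B$ be a symmetric $b\times b$ matrix with constant row (and column) sums, and let $C$ be a symmetric $c\times c$ matrix. Then the matrices $$M=\begin{pmatrix} B & N\\ N^T & C\end{pmatrix}\quad\text{and}\quad \tilde M=\begin{pmatrix} B & \tilde N\\ \tilde N^T & C\end{pmatrix}$$ are cospectral (have the same characteristic polynomial).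
   Context: $\mathbf{1}_b$ denotes the all-ones column vector of length $b$. *)

From HB Require Import structures.
From mathcomp Require Import all_boot all_order all_algebra.
Set Implicit Arguments. Unset Strict Implicit. Unset Printing Implicit Defensive.
Import Order.TTheory GRing.Theory Num.Theory.
Local Open Scope ring_scope.

Definition is_m101 (R : numFieldType) (b c : nat) (N : 'M[R]_(b, c)) : Prop :=
  forall i j, N i j \in [:: -1; 0; 1].

Definition cnt (R : numFieldType) (b : nat) (v : 'cV[R]_b) (x : R) : nat :=
  #|[set h : 'I_b | v h 0 == x]|.

Definition col_rule (R : numFieldType) (b : nat) (v w : 'cV[R]_b) : Prop :=
  ((\sum_(h < b) v h 0 = 0) /\ w = - v) \/
  (((cnt v 1).*2 = b)%N /\ ((cnt v 0).*2 = b)%N /\ w = const_mx 1 - v) \/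
  (((cnt v (-1)).*2 = b)%N /\ ((cnt v 0).*2 = b)%N /\ w = - const_mx 1 - v) \/
  (v = const_mx 1 /\ w = v) \/
  (v = - const_mx 1 /\ w = v).

From HB Require Import structures.
From mathcomp Require Import all_boot all_order all_algebra.
From mathcomp Require Import ring zify.
Set Implicit Arguments. Unset Strict Implicit. Unset Printing Implicit Defensive.
Import Order.TTheory GRing.Theory Num.Theory.
Local Open Scope ring_scope.

(* Let J be the all-ones b x b matrix and Q = (2/b) J - I, the
   reflection of R^b in the hyperplane orthogonal to the all-ones vector.
   Q is a symmetric involution, and for a column v one has
   Q v = (2/b) (sum of the entries of v) 1_b - v.  A direct check of the five
   column types shows that this is exactly the prescribed replacement column,
   so Q N = Ñ.  Since B has constant row sums and is symmetric, B J = J B,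
   hence B commutes with Q.  With P = diag(Q, I_c) (again an involution) we get
     P M P = [[Q B Q, Q N], [N^T Q, C]] = [[B, Ñ], [Ñ^T, C]] = M̃,
   so M̃ is similar to M and the characteristic polynomials agree. *)

(* Similar matrices have the same characteristic polynomial; stated with an
   explicit right inverse P' of P so that it applies to involutions directly. *)
Lemma char_poly_conj (R : comNzRingType) (n : nat) (A P P' : 'M[R]_n) :
  P *m P' = 1%:M -> char_poly (P *m A *m P') = char_poly A.
Proof.
move=> PP'; rewrite /char_poly.
set Pp := map_mx polyC P; set Pp' := map_mx polyC P'.
have PpPp' : Pp *m Pp' = 1%:M by rewrite -map_mxM PP' map_scalar_mx.
have -> : char_poly_mx (P *m A *m P') = Pp *m char_poly_mx A *m Pp'.
  rewrite /char_poly_mx mulmxBr mulmxBl !map_mxM -/Pp -/Pp'.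
  by congr (_ - _); rewrite scalar_mxC -mulmxA PpPp' mulmx1.
have detPP' : \det Pp * \det Pp' = 1 by rewrite -det_mulmx PpPp' det1.
by rewrite !det_mulmx mulrAC detPP' mul1r.
Qed.

Section Reflection.
Variable R : numFieldType.

Definition ones_reflection (n : nat) : 'M[R]_n :=
  (2 / n%:R) *: const_mx 1 - 1%:M.

Lemma ones_reflection_tr (n : nat) : (ones_reflection n)^T = ones_reflection n.
Proof. by rewrite /ones_reflection linearB /= linearZ /= trmx_const trmx1. Qed.

Lemma const1_mul (n : nat) :
  (const_mx 1 : 'M[R]_n) *m (const_mx 1 : 'M[R]_n) = n%:R *: const_mx 1.
Proof.
apply/matrixP=> i j; rewrite !mxE (eq_bigr (fun _ => 1)).
  by rewrite sumr_const card_ord mulr1.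
by move=> k _; rewrite !mxE mulr1.
Qed.

(* Q is an involution: (2/n) J - I squares to I because J^2 = n J. *)
Lemma ones_reflection_invol (n : nat) :
  ones_reflection n *m ones_reflection n = 1%:M.
Proof.
case: n => [|n]; first by rewrite [LHS]flatmx0 [RHS]flatmx0.
have n_neq0 : n.+1%:R != 0 :> R by rewrite pnatr_eq0.
rewrite /ones_reflection mulmxBl !mulmxBr -!scalemxAl -!scalemxAr const1_mul.
rewrite mulmx1 !mul1mx !scalerA -mulrA mulfVK //.
by apply/matrixP=> i j; rewrite !mxE; ring.
Qed.

(* A symmetric matrix with constant row sums commutes with the all-ones
   matrix, hence with the reflection. *)
Lemma ones_reflection_comm (n : nat) (B : 'M[R]_n) (r : R) :
  B^T = B -> (forall i, \sum_(k < n) B i k = r) ->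
  B *m ones_reflection n = ones_reflection n *m B.
Proof.
move=> BT rowB.
have BJ : B *m (const_mx 1 : 'M[R]_n) = r *: const_mx 1.
  apply/matrixP=> i j; rewrite !mxE mulr1 -(rowB i).
  by apply: eq_bigr => k _; rewrite !mxE mulr1.
have JB : (const_mx 1 : 'M[R]_n) *m B = r *: const_mx 1.
  by apply: trmx_inj; rewrite trmx_mul BT linearZ /= !trmx_const BJ.
by rewrite mulmxBr mulmxBl -scalemxAr -scalemxAl BJ JB mulmx1 mul1mx.
Qed.

Lemma ones_reflection_col (n : nat) (v : 'cV[R]_n) :
  ones_reflection n *m v = (2 / n%:R * \sum_k v k 0) *: const_mx 1 - v.
Proof.
rewrite /ones_reflection mulmxBl mul1mx -scalemxAl.
congr (_ - _); rewrite -scalerA; congr (_ *: _).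
apply/matrixP=> i j; rewrite (ord1 j) !mxE mulr1.
by apply: eq_bigr => k _; rewrite mxE mul1r.
Qed.

Lemma sum_half_support (n : nat) (v : 'cV[R]_n) (x : R) : x != 0 ->
  ((cnt v x).*2 = n)%N -> ((cnt v 0).*2 = n)%N ->
  \sum_h v h 0 = x *+ cnt v x.
Proof.
rewrite /cnt => x_neq0 hx h0.
set Sx := [set h | v h 0 == x] in hx *; set S0 := [set h | v h 0 == 0] in h0 *.
have disj : Sx :&: S0 = set0.
  by apply/setP=> h; rewrite !inE; case: eqP => // ->; rewrite (negbTE x_neq0).
have card_cover : #|Sx :|: S0| = n by rewrite cardsU disj cards0 subn0; lia.
have cover : Sx :|: S0 = setT.
  by apply/eqP; rewrite eqEcard subsetT cardsT card_ord card_cover leqnn.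
rewrite -sumr_const [RHS]big_mkcond /=; apply: eq_bigr => h _.
have : h \in Sx :|: S0 by rewrite cover inE.
rewrite !inE => /orP[] /eqP ->; first by rewrite eqxx.
by case: ifP => // /eqP <-.
Qed.

Lemma ones_reflection_ones (n : nat) : (0 < n)%N ->
  ones_reflection n *m const_mx 1 = const_mx 1 :> 'cV[R]_n.
Proof.
move=> n_gt0; rewrite ones_reflection_col.
rewrite (eq_bigr (fun _ => 1)) => [|k _]; last by rewrite mxE.
rewrite sumr_const card_ord mulfVK ?pnatr_eq0 -?lt0n //.
by rewrite scaler_nat mulr2n addrK.
Qed.

Lemma ones_reflection_col_rule (n : nat) (v w : 'cV[R]_n) :
  col_rule v w -> ones_reflection n *m v = w.
Proof.
case: n v w => [|n] v w; first by move=> _; rewrite [LHS]flatmx0 [RHS]flatmx0.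
have half_n (k : nat) : (k.*2 = n.+1)%N -> 2 / n.+1%:R * k%:R = 1 :> R.
  move=> hk; have k_gt0 : (0 < k)%N by lia.
  by rewrite -hk -muln2 natrM; field; rewrite pnatr_eq0 -lt0n.
case=> [[sum0 ->]|[[h1 [h0 ->]]|[[h1 [h0 ->]]|[[-> ->]|[-> ->]]]]].
- by rewrite ones_reflection_col sum0 mulr0 scale0r sub0r.
- rewrite ones_reflection_col (sum_half_support (oner_neq0 R) h1 h0).
  by rewrite half_n // scale1r.
- rewrite ones_reflection_col (sum_half_support _ h1 h0) ?oppr_eq0 ?oner_neq0 //.
  by rewrite mulNrn mulrN half_n // scaleN1r.
- by rewrite ones_reflection_ones.
- by rewrite mulmxN ones_reflection_ones.
Qed.

Lemma ones_reflection_switch (b c : nat) (N Nt : 'M[R]_(b, c)) :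
  (forall j, col_rule (col j N) (col j Nt)) -> ones_reflection b *m N = Nt.
Proof.
move=> rule; apply/matrixP=> i j.
have := congr1 (fun v : 'cV_b => v i 0) (ones_reflection_col_rule (rule j)).
by rewrite colE mulmxA -colE !mxE.
Qed.

End Reflection.

Lemma block_conj_switch (R : comNzRingType) (b c : nat) (Q B : 'M[R]_b)
    (N : 'M[R]_(b, c)) (C : 'M[R]_c) :
  Q *m Q = 1%:M -> Q^T = Q -> B *m Q = Q *m B ->
  block_mx Q 0 0 1%:M *m block_mx B N N^T C *m block_mx Q 0 0 1%:M
    = block_mx B (Q *m N) (Q *m N)^T C.
Proof.
move=> QQ QT BQ.
rewrite !mulmx_block !mulmx0 !mul0mx !addr0 !add0r !mulmx1 !mul1mx.
by rewrite -BQ -mulmxA QQ mulmx1 trmx_mul QT.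
Qed.

Theorem proposition3p4 (R : realFieldType) (b c : nat)
  (N Nt : 'M[R]_(b, c)) (B : 'M[R]_b) (C : 'M[R]_c) :
  is_m101 N ->
  (forall j : 'I_c, col_rule (col j N) (col j Nt)) ->
  B^T = B ->
  (exists r : R, forall i : 'I_b, \sum_(k < b) B i k = r) ->
  C^T = C ->
  char_poly (block_mx B N N^T C) = char_poly (block_mx B Nt Nt^T C).
Proof.
move=> _ rule BT [r rowB] _.
set Q := ones_reflection R b.
set P := block_mx Q 0 0 (1%:M : 'M[R]_c).
have QQ : Q *m Q = 1%:M := ones_reflection_invol R b.
have PP : P *m P = 1%:M.
  rewrite mulmx_block QQ !mulmx0 !mul0mx !addr0 !add0r mulmx1.
  by rewrite -scalar_mx_block.
rewrite -(char_poly_conj _ PP) block_conj_switch //.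
- by rewrite (ones_reflection_switch rule).
- exact: ones_reflection_tr.
- exact: ones_reflection_comm BT rowB.
Qed.
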